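(* Let $\mathcal{Q}$ be a congruence permutable quasivariety of algebras (i.e. $\alpha\circ\beta=\beta\circ\alpha$ for all congruences $\alpha,\beta$ of every algebra in $\mathcal{Q}$). Then the class of all lattices embeddable into the congruence lattice of some algebra in $\mathcal{Q}$ is a quasivariety.
   Context: A quasivariety is a class of structures axiomatizable by quasi-identities (equivalently, containing the trivial structure and closed under isomorphic copies, substructures, direct products and ultraproducts). *)

From Stdlib Require Import Fin.

Record signature := Signature { op : Type ; arity : op -> nat }.

Record algebra (S : signature) := Algebra {
  carrier :> Type ;
  interp : forall o : op S, (Fin.t (arity S o) -> carrier) -> carrier }.
Arguments carrier {S} _.
Arguments interp {S} _ _ _.

Definition is_hom {S} (A B : algebra S) (h : A -> B) : Prop :=
  forall (o : op S) (args : Fin.t (arity S o) -> A),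
    h (interp A o args) = interp B o (fun k => h (args k)).

Definition injective {X Y : Type} (f : X -> Y) := forall x y, f x = f y -> x = y.
Definition surjective {X Y : Type} (f : X -> Y) := forall y, exists x, f x = y.

Definition isomorphic {S} (A B : algebra S) : Prop :=
  exists h : A -> B, is_hom A B h /\ injective h /\ surjective h.

Definition prod_alg {S} {I : Type} (A : I -> algebra S) : algebra S :=
  @Algebra S (forall i, A i)
    (fun o args => fun i => interp (A i) o (fun k => args k i)).

Definition ultrafilter {I : Type} (U : (I -> Prop) -> Prop) : Prop :=
  U (fun _ => True) /\
  ~ U (fun _ => False) /\
  (forall X Y : I -> Prop, U X -> (forall i, X i -> Y i) -> U Y) /\
  (forall X Y : I -> Prop, U X -> U Y -> U (fun i => X i /\ Y i)) /\
  (forall X : I -> Prop, U X \/ U (fun i => ~ X i)).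

Definition alg_class (S : signature) := algebra S -> Prop.

Definition quasivariety {S} (K : alg_class S) : Prop :=
  (forall T : algebra S, (exists t : T, forall x : T, x = t) -> K T) /\
  (forall A B : algebra S, K A -> isomorphic A B -> K B) /\
  (* substructures (up to isomorphism: algebras embeddable into a member) *)
  (forall (A B : algebra S) (h : B -> A),
      K A -> inhabited B -> is_hom B A h -> injective h -> K B) /\
  (forall (I : Type) (A : I -> algebra S), (forall i, K (A i)) -> K (prod_alg A)) /\
  (* ultraproducts: B is (isomorphic to) prod A / U, given as the image of a
     surjective homomorphism whose kernel is the ultrafilter equivalence *)
  (forall (I : Type) (A : I -> algebra S) (U : (I -> Prop) -> Prop),
      ultrafilter U -> (forall i, K (A i)) ->
      forall (B : algebra S) (h : prod_alg A -> B),
        is_hom (prod_alg A) B h -> surjective h ->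
        (forall f g : prod_alg A, h f = h g <-> U (fun i => f i = g i)) ->
        K B).

Definition is_congruence {S} (A : algebra S) (th : A -> A -> Prop) : Prop :=
  (forall x, th x x) /\
  (forall x y, th x y -> th y x) /\
  (forall x y z, th x y -> th y z -> th x z) /\
  (forall (o : op S) (a b : Fin.t (arity S o) -> A),
      (forall k, th (a k) (b k)) -> th (interp A o a) (interp A o b)).

Definition rel_comp {X : Type} (al be : X -> X -> Prop) : X -> X -> Prop :=
  fun x y => exists z, al x z /\ be z y.

Definition congruence_permutable {S} (A : algebra S) : Prop :=
  forall al be : A -> A -> Prop, is_congruence A al -> is_congruence A be ->
    forall x y, rel_comp al be x y <-> rel_comp be al x y.

Definition con_meet {S} (A : algebra S) (al be : A -> A -> Prop) : A -> A -> Prop :=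
  fun x y => al x y /\ be x y.
Definition con_join {S} (A : algebra S) (al be : A -> A -> Prop) : A -> A -> Prop :=
  fun x y => forall ga : A -> A -> Prop, is_congruence A ga ->
    (forall u v, al u v -> ga u v) -> (forall u v, be u v -> ga u v) -> ga x y.

(** The signature of lattices: [true] = join, [false] = meet, both binary. *)
Definition lattice_sig : signature := @Signature bool (fun _ => 2).

Definition pair2 {T : Type} (x y : T) : Fin.t 2 -> T :=
  fun k => match k with Fin.F1 => x | Fin.FS _ => y end.

Definition ljoin (L : algebra lattice_sig) (x y : L) : L := interp L true (pair2 x y).
Definition lmeet (L : algebra lattice_sig) (x y : L) : L := interp L false (pair2 x y).

Definition is_lattice (L : algebra lattice_sig) : Prop :=
  (forall x y : L, ljoin L x y = ljoin L y x) /\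
  (forall x y : L, lmeet L x y = lmeet L y x) /\
  (forall x y z : L, ljoin L x (ljoin L y z) = ljoin L (ljoin L x y) z) /\
  (forall x y z : L, lmeet L x (lmeet L y z) = lmeet L (lmeet L x y) z) /\
  (forall x y : L, ljoin L x (lmeet L x y) = x) /\
  (forall x y : L, lmeet L x (ljoin L x y) = x).

(** Lattice embedding of L into Con A; congruences are represented as
    relations, compared extensionally. *)
Definition embeds_into_Con {S} (L : algebra lattice_sig) (A : algebra S) : Prop :=
  exists f : L -> (A -> A -> Prop),
    (forall x, is_congruence A (f x)) /\
    (forall x y, (forall a b, f x a b <-> f y a b) -> x = y) /\
    (forall x y a b, f (ljoin L x y) a b <-> con_join A (f x) (f y) a b) /\
    (forall x y a b, f (lmeet L x y) a b <-> con_meet A (f x) (f y) a b).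

Definition Lcon {S} (Q : alg_class S) : alg_class lattice_sig :=
  fun L => is_lattice L /\ exists A : algebra S, Q A /\ embeds_into_Con L A.

From Stdlib Require Import Fin Setoid Classical ClassicalEpsilon ChoiceFacts
  FunctionalExtensionality ProofIrrelevance PropExtensionality.

(* In a congruence permutable algebra the join of two congruences is their
   relational product, so an embedding L -> Con A is described by congruences
   f x with f (x \/ y) = f x o f y and f (x /\ y) = f x /\ f y: a conjunction of
   existentially quantified conditions on pairs of elements.  Such conditions
   are preserved coordinatewise by direct products and, by the Los argument,
   modulo an ultrafilter by ultraproducts.  So if each L_i embeds into Con A_i,
   then the product (resp. ultraproduct) of the L_i embeds into Con of the
   product (resp. ultraproduct) of the A_i, which lies in the quasivariety. *)

Definition rel_eq {X : Type} (r s : X -> X -> Prop) : Prop :=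
  forall a b, r a b <-> s a b.

Lemma rel_eq_refl {X : Type} (r : X -> X -> Prop) : rel_eq r r.
Proof. now intros a b. Qed.

Lemma choice_dep {I : Type} {T : I -> Type} (P : forall i, T i -> Prop) :
  (forall i, exists z, P i z) -> exists g : forall i, T i, forall i, P i (g i).
Proof. exact (non_dep_dep_functional_choice choice T P). Qed.

Definition update {I : Type} {T : I -> Type} (d : forall j, T j) (i : I) (a : T i) :
  forall j, T j :=
  fun j => match excluded_middle_informative (i = j) with
           | left e => eq_rect i T a j e
           | right _ => d j
           end.

Lemma update_same {I : Type} {T : I -> Type} (d : forall j, T j) (i : I) (a : T i) :
  update d i a i = a.
Proof.
  unfold update. destruct (excluded_middle_informative (i = i)) as [e|n].
  - now rewrite (proof_irrelevance _ e eq_refl).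
  - now contradiction n.
Qed.

Lemma update_other {I : Type} {T : I -> Type} (d : forall j, T j) (i j : I) (a : T i) :
  i <> j -> update d i a j = d j.
Proof. intro n. unfold update. now destruct (excluded_middle_informative (i = j)). Qed.

Lemma pair2_map {T U : Type} (h : T -> U) (x y : T) :
  (fun k => h (pair2 x y k)) = pair2 (h x) (h y).
Proof.
  apply functional_extensionality; intro k.
  now apply (Fin.caseS' k (fun k => h (pair2 x y k) = pair2 (h x) (h y) k)).
Qed.

Lemma hom_ljoin {L B : algebra lattice_sig} (h : L -> B) :
  is_hom L B h -> forall x y, h (ljoin L x y) = ljoin B (h x) (h y).
Proof. intros Hh x y. unfold ljoin. now rewrite Hh, pair2_map. Qed.

Lemma hom_lmeet {L B : algebra lattice_sig} (h : L -> B) :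
  is_hom L B h -> forall x y, h (lmeet L x y) = lmeet B (h x) (h y).
Proof. intros Hh x y. unfold lmeet. now rewrite Hh, pair2_map. Qed.

Lemma prod_ljoin {I : Type} (L : I -> algebra lattice_sig) (x y : prod_alg L) (i : I) :
  ljoin (prod_alg L) x y i = ljoin (L i) (x i) (y i).
Proof. unfold ljoin; simpl. f_equal. exact (pair2_map (fun z => z i) x y). Qed.

Lemma prod_lmeet {I : Type} (L : I -> algebra lattice_sig) (x y : prod_alg L) (i : I) :
  lmeet (prod_alg L) x y i = lmeet (L i) (x i) (y i).
Proof. unfold lmeet; simpl. f_equal. exact (pair2_map (fun z => z i) x y). Qed.

Lemma is_lattice_singleton (L : algebra lattice_sig) :
  (exists t : L, forall x, x = t) -> is_lattice L.
Proof.
  intros [t Ht].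
  repeat split; intros; (etransitivity; [apply Ht | symmetry; apply Ht]).
Qed.

Lemma is_lattice_hom_image (L B : algebra lattice_sig) (h : L -> B) :
  is_lattice L -> is_hom L B h -> surjective h -> is_lattice B.
Proof.
  intros (H1&H2&H3&H4&H5&H6) Hh Hs.
  repeat split; intros;
  repeat match goal with v : carrier B |- _ => destruct (Hs v) as [? <-]; clear v end;
  repeat (rewrite <- (hom_ljoin h Hh) || rewrite <- (hom_lmeet h Hh)); f_equal; auto.
Qed.

Lemma is_lattice_hom_preimage (L B : algebra lattice_sig) (h : B -> L) :
  is_lattice L -> is_hom B L h -> injective h -> is_lattice B.
Proof.
  intros (H1&H2&H3&H4&H5&H6) Hh Hi.
  repeat split; intros; apply Hi;
  repeat (rewrite (hom_ljoin h Hh) || rewrite (hom_lmeet h Hh)); auto.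
Qed.

Lemma is_lattice_prod {I : Type} (L : I -> algebra lattice_sig) :
  (forall i, is_lattice (L i)) -> is_lattice (prod_alg L).
Proof.
  intros HL. repeat split; intros; apply functional_extensionality_dep; intro i;
  repeat (rewrite prod_ljoin || rewrite prod_lmeet); apply (HL i).
Qed.

Definition unit_alg (S : signature) : algebra S := @Algebra S unit (fun _ _ => tt).

Lemma quasivariety_unit_alg {S : signature} (Q : alg_class S) :
  quasivariety Q -> Q (unit_alg S).
Proof. intros [Qtriv _]. apply Qtriv. exists tt. now intros []. Qed.

Section Congruence_projections.
Context {S : signature} {A : algebra S} {r : A -> A -> Prop} (Hr : is_congruence A r).

Lemma cong_refl x : r x x.
Proof. exact (proj1 Hr x). Qed.

Lemma cong_sym x y : r x y -> r y x.
Proof. exact (proj1 (proj2 Hr) x y). Qed.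

Lemma cong_trans x y z : r x y -> r y z -> r x z.
Proof. exact (proj1 (proj2 (proj2 Hr)) x y z). Qed.

Lemma cong_compat (o : op S) (a b : Fin.t (arity S o) -> A) :
  (forall k, r (a k) (b k)) -> r (interp A o a) (interp A o b).
Proof. exact (proj2 (proj2 (proj2 Hr)) o a b). Qed.

End Congruence_projections.

Lemma is_congruence_full {S : signature} (A : algebra S) :
  is_congruence A (fun _ _ => True).
Proof. repeat split. Qed.

Lemma con_join_rel_comp {S : signature} (A : algebra S) (al be : A -> A -> Prop) :
  congruence_permutable A -> is_congruence A al -> is_congruence A be ->
  forall x y, con_join A al be x y <-> rel_comp al be x y.
Proof.
  intros Hp Ha Hb. pose proof Ha as (ar&asy&atr&ac). pose proof Hb as (br&bsy&btr&bc).
  assert (Hc : is_congruence A (rel_comp al be)).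
  { split; [|split; [|split]].
    - intro x. exists x; auto.
    - intros x y [z [H1 H2]]. apply (Hp al be Ha Hb). exists z; auto.
    - intros x y w [z1 [H1 H2]] [z2 [H3 H4]].
      destruct (proj2 (Hp al be Ha Hb z1 z2) (ex_intro _ y (conj H2 H3))) as [z3 [H5 H6]].
      exists z3; split; eauto.
    - intros o a b H.
      destruct (choice_dep (fun k z => al (a k) z /\ be z (b k)) H) as [c Hc].
      exists (interp A o c). split; [apply ac | apply bc]; intro k; apply Hc. }
  intros x y; split.
  - intro H. apply (H _ Hc); intros u v Huv; [exists v | exists u]; auto.
  - intros [z [H1 H2]] ga (gr&gs&gt&gc) Hg1 Hg2. eauto.
Qed.

Record comp_embedding {S : signature} (L : algebra lattice_sig) (A : algebra S)
  (f : L -> A -> A -> Prop) : Prop := {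
  emb_congruence : forall x, is_congruence A (f x);
  emb_injective : forall x y, rel_eq (f x) (f y) -> x = y;
  emb_join : forall x y a b, f (ljoin L x y) a b <-> rel_comp (f x) (f y) a b;
  emb_meet : forall x y a b, f (lmeet L x y) a b <-> f x a b /\ f y a b }.

Lemma comp_embedding_rel_eq {S : signature} {L : algebra lattice_sig} {A : algebra S}
  {f : L -> A -> A -> Prop} :
  comp_embedding L A f -> forall x y, x = y <-> rel_eq (f x) (f y).
Proof.
  intros Hf x y. split; [intros ->; apply rel_eq_refl | apply (emb_injective _ _ _ Hf)].
Qed.

Lemma Lcon_hom_image {S : signature} (Q : alg_class S) (L B : algebra lattice_sig)
  (A : algebra S) (h : L -> B) (th : L -> A -> A -> Prop) :
  is_lattice L -> is_hom L B h -> surjective h -> Q A -> congruence_permutable A ->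
  (forall x, is_congruence A (th x)) ->
  (forall x y, h x = h y <-> rel_eq (th x) (th y)) ->
  (forall x y a b, th (ljoin L x y) a b <-> rel_comp (th x) (th y) a b) ->
  (forall x y a b, th (lmeet L x y) a b <-> th x a b /\ th y a b) ->
  Lcon Q B.
Proof.
  intros HL Hh Hs QA Hperm Hc Hker Hj Hm.
  split; [exact (is_lattice_hom_image L B h HL Hh Hs) |].
  exists A. split; [exact QA |].
  destruct (choice_dep (T := fun _ => carrier L) (fun b x => h x = b) Hs) as [sec Hsec].
  exists (fun b => th (sec b)). split; [|split; [|split]]; cbv beta.
  - intro; apply Hc.
  - intros x y E. rewrite <- (Hsec x), <- (Hsec y). now apply Hker.
  - intros x y a b.
    assert (E : h (sec (ljoin B x y)) = h (ljoin L (sec x) (sec y)))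
      by now rewrite (hom_ljoin h Hh), !Hsec.
    rewrite (proj1 (Hker _ _) E a b), Hj. symmetry. now apply con_join_rel_comp.
  - intros x y a b.
    assert (E : h (sec (lmeet B x y)) = h (lmeet L (sec x) (sec y)))
      by now rewrite (hom_lmeet h Hh), !Hsec.
    now rewrite (proj1 (Hker _ _) E a b), Hm.
Qed.

Lemma Lcon_comp_embedding {S : signature} (Q : alg_class S) (L : algebra lattice_sig) :
  quasivariety Q -> (forall A, Q A -> congruence_permutable A) -> Lcon Q L ->
  exists A : algebra S, Q A /\ inhabited A /\ exists f, comp_embedding L A f.
Proof.
  intros HQ Hperm [_ [A [QA [f (Hc & Hi & Hj & Hm)]]]].
  destruct (classic (inhabited A)) as [HA | HA].
  - exists A. split; [exact QA | split; [exact HA |]].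
    exists f. split; [exact Hc | exact Hi | | exact Hm].
    intros x y a b. rewrite Hj. now apply con_join_rel_comp; auto.
  - (* an empty algebra has a single congruence, so L is trivial *)
    exists (unit_alg S). split; [now apply quasivariety_unit_alg |].
    split; [exact (inhabits tt) |].
    exists (fun _ _ _ => True). split.
    + intros; apply is_congruence_full.
    + intros x y _. apply Hi. intros a. contradiction HA. exact (inhabits a).
    + intros x y a b. split; [now exists a | trivial].
    + tauto.
Qed.

(** * Products *)

Section Products.
Context {S : signature} {I : Type} (A : I -> algebra S).

Definition prod_rel (r : forall i, A i -> A i -> Prop) : prod_alg A -> prod_alg A -> Prop :=
  fun a b => forall i, r i (a i) (b i).

Lemma is_congruence_prod_rel (r : forall i, A i -> A i -> Prop) :
  (forall i, is_congruence (A i) (r i)) -> is_congruence (prod_alg A) (prod_rel r).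
Proof.
  intro Hr. unfold prod_rel. split; [|split; [|split]].
  - intros a i. apply (cong_refl (Hr i)).
  - intros a b H i. apply (cong_sym (Hr i)), H.
  - intros a b c H1 H2 i. apply (cong_trans (Hr i) _ _ _ (H1 i) (H2 i)).
  - intros o a b H i. apply (cong_compat (Hr i)). intro k. apply H.
Qed.

Lemma prod_rel_comp (r s : forall i, A i -> A i -> Prop) (a b : prod_alg A) :
  prod_rel (fun i => rel_comp (r i) (s i)) a b <-> rel_comp (prod_rel r) (prod_rel s) a b.
Proof.
  split.
  - intro H. destruct (choice_dep (fun i z => r i (a i) z /\ s i z (b i)) H) as [c Hc].
    exists c. split; intro i; apply Hc.
  - intros [c [H1 H2]] i. now exists (c i).
Qed.

Lemma prod_rel_iff (r s : forall i, A i -> A i -> Prop) (a b : prod_alg A) :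
  (forall i, r i (a i) (b i) <-> s i (a i) (b i)) -> (prod_rel r a b <-> prod_rel s a b).
Proof. intro E. split; intros H i; apply E, H. Qed.

Lemma prod_rel_meet (r s : forall i, A i -> A i -> Prop) (a b : prod_alg A) :
  prod_rel (fun i c e => r i c e /\ s i c e) a b <-> prod_rel r a b /\ prod_rel s a b.
Proof. split; [intro H; split; intro i; apply H | intros [H1 H2] i; now split]. Qed.

(* Recovering the factors from the product needs inhabited factors and
   reflexive relations: a pair (a, b) of A i is tested through the elements
   [update d i a] and [update d i b]. *)
Lemma prod_rel_eq_iff (d : forall i, A i) (r s : forall i, A i -> A i -> Prop) :
  (forall i a, r i a a) -> (forall i a, s i a a) ->
  (forall i, rel_eq (r i) (s i)) <-> rel_eq (prod_rel r) (prod_rel s).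
Proof.
  intros Hr Hs. split.
  - intros E a b. split; intros H i; apply E, H.
  - intros E i a b.
    assert (Hupd : forall t : forall j, A j -> A j -> Prop, (forall j c, t j c c) ->
              prod_rel t (update d i a) (update d i b) <-> t i a b).
    { intros t Ht. split.
      - intro H. specialize (H i). now rewrite !update_same in H.
      - intros H j. destruct (classic (i = j)) as [<- | n].
        + now rewrite !update_same.
        + rewrite !update_other by exact n. apply Ht. }
    rewrite <- (Hupd r Hr), <- (Hupd s Hs). apply E.
Qed.

End Products.

(** * Ultraproducts *)

Section Ultrafilters.
Context {I : Type} (U : (I -> Prop) -> Prop) (HU : ultrafilter U).

Lemma U_mono (X Y : I -> Prop) : U X -> (forall i, X i -> Y i) -> U Y.
Proof. destruct HU as (_&_&Hm&_); eauto. Qed.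

Lemma U_and (X Y : I -> Prop) : U X -> U Y -> U (fun i => X i /\ Y i).
Proof. destruct HU as (_&_&_&Ha&_); auto. Qed.

Lemma U_and_iff (X Y : I -> Prop) : U (fun i => X i /\ Y i) <-> U X /\ U Y.
Proof.
  split; [intro H; split; apply (U_mono _ _ H); tauto | intros [HX HY]; now apply U_and].
Qed.

Lemma U_full (X : I -> Prop) : (forall i, X i) -> U X.
Proof. destruct HU as (Ht&_); intro H. apply (U_mono _ _ Ht). auto. Qed.

Lemma U_iff (X Y : I -> Prop) : (forall i, X i <-> Y i) -> (U X <-> U Y).
Proof. intro H; split; intro H0; apply (U_mono _ _ H0); apply H. Qed.

Lemma U_compl (X : I -> Prop) : ~ U X -> U (fun i => ~ X i).
Proof. destruct HU as (_&_&_&_&Hu); intro H. now destruct (Hu X). Qed.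

Lemma U_empty (X : I -> Prop) : U X -> (forall i, ~ X i) -> False.
Proof. destruct HU as (_&H0&_); intros HX Hn. apply H0, (U_mono _ _ HX), Hn. Qed.

Lemma U_fin (n : nat) (X : Fin.t n -> I -> Prop) :
  (forall k, U (X k)) -> U (fun i => forall k, X k i).
Proof.
  induction n as [|n IH]; intro HX.
  - apply U_full. intros i k. exact (Fin.case0 (fun k => X k i) k).
  - apply (U_mono _ _ (U_and _ _ (HX Fin.F1) (IH (fun k => X (Fin.FS k)) (fun k => HX (Fin.FS k))))).
    intros i [H1 H2] k. now apply (Fin.caseS' k (fun k => X k i)).
Qed.

Context {T : I -> Type}.

Definition ueq (f g : forall i, T i) : Prop := U (fun i => f i = g i).

Lemma ueq_refl (f : forall i, T i) : ueq f f.
Proof. now apply U_full. Qed.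

Lemma ueq_sym (f g : forall i, T i) : ueq f g -> ueq g f.
Proof. intro H. apply (U_mono _ _ H). auto. Qed.

Lemma ueq_trans (f g h : forall i, T i) : ueq f g -> ueq g h -> ueq f h.
Proof. intros H1 H2. apply (U_mono _ _ (U_and _ _ H1 H2)). now intros i [-> ->]. Qed.

(* The carrier of the ultraproduct: the ueq-classes, as predicates. *)
Definition uprod_car : Type := { C : (forall i, T i) -> Prop | exists f, C = ueq f }.

Definition ucls (f : forall i, T i) : uprod_car := exist _ (ueq f) (ex_intro _ f eq_refl).

Definition urep (C : uprod_car) : forall i, T i :=
  proj1_sig (constructive_indefinite_description _ (proj2_sig C)).

Lemma ucls_urep (C : uprod_car) : ucls (urep C) = C.
Proof.
  destruct C as [C HC]. apply subset_eq_compat. symmetry.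
  exact (proj2_sig (constructive_indefinite_description _ HC)).
Qed.

Lemma ucls_surj (C : uprod_car) : exists f, ucls f = C.
Proof. exists (urep C). apply ucls_urep. Qed.

Lemma ucls_eq (f g : forall i, T i) : ucls f = ucls g <-> ueq f g.
Proof.
  split.
  - intro E. apply (f_equal (fun C => proj1_sig C g)) in E. simpl in E.
    rewrite E. apply ueq_refl.
  - intro E. apply subset_eq_compat, functional_extensionality; intro h.
    apply propositional_extensionality; split; intro H.
    + exact (ueq_trans _ _ _ (ueq_sym _ _ E) H).
    + exact (ueq_trans _ _ _ E H).
Qed.

Lemma urep_ucls (f : forall i, T i) : ueq (urep (ucls f)) f.
Proof. apply ucls_eq, ucls_urep. Qed.

Definition uprod_rel (r : forall i, T i -> T i -> Prop) (C D : uprod_car) : Prop :=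
  U (fun i => r i (urep C i) (urep D i)).

Lemma uprod_rel_ucls (r : forall i, T i -> T i -> Prop) (a b : forall i, T i) :
  uprod_rel r (ucls a) (ucls b) <-> U (fun i => r i (a i) (b i)).
Proof.
  pose proof (U_and _ _ (urep_ucls a) (urep_ucls b)) as E.
  split; intro H; apply (U_mono _ _ (U_and _ _ E H)); intros i [[Ea Eb] Hi];
    [now rewrite <- Ea, <- Eb | now rewrite Ea, Eb].
Qed.

Lemma uprod_rel_comp (d : forall i, T i) (r s : forall i, T i -> T i -> Prop)
  (C D : uprod_car) :
  uprod_rel (fun i => rel_comp (r i) (s i)) C D <-> rel_comp (uprod_rel r) (uprod_rel s) C D.
Proof.
  destruct (ucls_surj C) as [a <-], (ucls_surj D) as [b <-].
  rewrite uprod_rel_ucls. split.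
  - intro H.
    assert (Hw : forall i, exists z : T i,
               rel_comp (r i) (s i) (a i) (b i) -> r i (a i) z /\ s i z (b i)).
    { intro i. destruct (classic (rel_comp (r i) (s i) (a i) (b i))) as [[z Hz] | Hn].
      - now exists z.
      - exists (d i). tauto. }
    destruct (choice_dep _ Hw) as [e He].
    exists (ucls e). rewrite !uprod_rel_ucls.
    split; apply (U_mono _ _ H); intros i Hi; apply (He i Hi).
  - intros [E [H1 H2]]. destruct (ucls_surj E) as [e <-].
    rewrite uprod_rel_ucls in H1, H2.
    apply (U_mono _ _ (U_and _ _ H1 H2)). intros i Hi. now exists (e i).
Qed.

Lemma uprod_rel_meet (r s : forall i, T i -> T i -> Prop) (C D : uprod_car) :
  uprod_rel (fun i c e => r i c e /\ s i c e) C D <-> uprod_rel r C D /\ uprod_rel s C D.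
Proof. apply U_and_iff. Qed.

(* Los's theorem for the formula "r and s agree": if they disagree on a set in
   U, pick a disagreeing pair in each such coordinate; since exactly one of r, s
   holds at that pair, the classes of these pairs separate the ultraproducts. *)
Lemma uprod_rel_eq_iff (d : forall i, T i) (r s : forall i, T i -> T i -> Prop) :
  U (fun i => rel_eq (r i) (s i)) <-> rel_eq (uprod_rel r) (uprod_rel s).
Proof.
  split.
  - intros H C D. split; intro H';
      apply (U_mono _ _ (U_and _ _ H H')); intros i [E Hi]; now apply E.
  - intro E. apply NNPP; intro Hn. apply U_compl in Hn.
    assert (Hp : forall i, exists p : T i * T i,
               ~ rel_eq (r i) (s i) -> ~ (r i (fst p) (snd p) <-> s i (fst p) (snd p))).
    { intro i.
      destruct (classic (exists p : T i * T i, ~ (r i (fst p) (snd p) <-> s i (fst p) (snd p))))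
        as [[p Hp] | Hall].
      - now exists p.
      - exists (d i, d i). intros Hne _. apply Hne. intros a b.
        apply NNPP. intro Hab. apply Hall. now exists (a, b). }
    destruct (choice_dep _ Hp) as [p Hsep].
    set (a := fun i => fst (p i)); set (b := fun i => snd (p i)).
    assert (Eab : U (fun i => r i (a i) (b i)) <-> U (fun i => s i (a i) (b i))).
    { rewrite <- !uprod_rel_ucls. apply E. }
    destruct (classic (U (fun i => r i (a i) (b i)))) as [Hr | Hr].
    + apply (U_empty _ (U_and _ _ Hn (U_and _ _ Hr (proj1 Eab Hr)))).
      intros i [Hw [Hri Hsi]]. now apply (Hsep i Hw).
    + apply U_compl in Hr.
      assert (Hs : U (fun i => s i (a i) (b i))).
      { apply (U_mono _ _ (U_and _ _ Hn Hr)). intros i [Hw Hri].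
        apply NNPP. intro Hsi. apply (Hsep i Hw). tauto. }
      apply (U_empty _ (U_and _ _ Hr (proj2 Eab Hs))). tauto.
Qed.

End Ultrafilters.

Section Ultraproduct_algebra.
Context {S : signature} {I : Type} (U : (I -> Prop) -> Prop) (HU : ultrafilter U)
  (A : I -> algebra S).

Definition ultraproduct : algebra S :=
  @Algebra S (uprod_car U (T := fun i => carrier (A i)))
    (fun o args => ucls U (fun i => interp (A i) o (fun k => urep U (args k) i))).

Lemma ultraproduct_hom : is_hom (prod_alg A) ultraproduct (ucls U).
Proof.
  intros o args. simpl. apply (ucls_eq U HU).
  apply (U_mono U HU _ _ (U_fin U HU _ (fun k i => args k i = urep U (ucls U (args k)) i)
                            (fun k => ueq_sym U HU _ _ (urep_ucls U HU (args k))))).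
  intros i H. f_equal. now apply functional_extensionality.
Qed.

Lemma is_congruence_uprod_rel (r : forall i, A i -> A i -> Prop) :
  (forall i, is_congruence (A i) (r i)) -> is_congruence ultraproduct (uprod_rel U r).
Proof.
  intro Hr. split; [|split; [|split]].
  - intro C. apply (U_full U HU). intro i. apply (cong_refl (Hr i)).
  - intros C D H. apply (U_mono U HU _ _ H). intro i. apply (cong_sym (Hr i)).
  - intros C D E H1 H2. apply (U_mono U HU _ _ (U_and U HU _ _ H1 H2)).
    intros i [G1 G2]. exact (cong_trans (Hr i) _ _ _ G1 G2).
  - intros o a b H. simpl. apply (uprod_rel_ucls U HU).
    apply (U_mono U HU _ _ (U_fin U HU _ _ H)). intros i Hi. now apply (cong_compat (Hr i)).
Qed.

End Ultraproduct_algebra.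

(** * Closure properties of [Lcon Q] *)

Section Lcon_closure.
Context {S : signature} (Q : alg_class S) (HQ : quasivariety Q)
  (Hperm : forall A, Q A -> congruence_permutable A).

Lemma Lcon_family {I : Type} (L : I -> algebra lattice_sig) :
  (forall i, Lcon Q (L i)) ->
  exists (A : I -> algebra S) (f : forall i, L i -> A i -> A i -> Prop) (d : forall i, A i),
    (forall i, Q (A i)) /\ (forall i, comp_embedding (L i) (A i) (f i)).
Proof.
  intro HL.
  destruct (choice_dep _ (fun i => Lcon_comp_embedding Q (L i) HQ Hperm (HL i))) as [A HA].
  destruct (choice_dep (T := fun i => L i -> A i -> A i -> Prop) _
              (fun i => proj2 (proj2 (HA i)))) as [f Hf].
  destruct (choice_dep (T := fun i => carrier (A i)) (fun _ _ => True)) as [d _].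
  { intro i. destruct (proj1 (proj2 (HA i))) as [z]. now exists z. }
  exists A, f, d. split; [intro i; apply HA | exact Hf].
Qed.

Lemma Lcon_singleton (T : algebra lattice_sig) :
  (exists t : T, forall x : T, x = t) -> Lcon Q T.
Proof.
  intros [t Ht].
  apply (Lcon_hom_image Q T T (unit_alg S) (fun x => x) (fun _ _ _ => True)).
  - apply is_lattice_singleton. now exists t.
  - now intros o args.
  - intro y. now exists y.
  - now apply quasivariety_unit_alg.
  - now apply Hperm, quasivariety_unit_alg.
  - intros; apply is_congruence_full.
  - intros x y. rewrite (Ht x), (Ht y). split; [intros _; apply rel_eq_refl | trivial].
  - intros x y a b. split; [now exists a | trivial].
  - tauto.
Qed.

Lemma Lcon_iso (L B : algebra lattice_sig) : Lcon Q L -> isomorphic L B -> Lcon Q B.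
Proof.
  intros HL [h [Hh [Hinj Hs]]].
  destruct (Lcon_comp_embedding Q L HQ Hperm HL) as [A [QA [_ [f Hf]]]].
  apply (Lcon_hom_image Q L B A h f (proj1 HL) Hh Hs QA (Hperm A QA) (emb_congruence _ _ _ Hf)).
  - intros x y. rewrite <- (comp_embedding_rel_eq Hf). split; [apply Hinj | now intros ->].
  - apply Hf.
  - apply Hf.
Qed.

Lemma Lcon_sub (L B : algebra lattice_sig) (h : B -> L) :
  Lcon Q L -> inhabited B -> is_hom B L h -> injective h -> Lcon Q B.
Proof.
  intros HL _ Hh Hinj.
  destruct (Lcon_comp_embedding Q L HQ Hperm HL) as [A [QA [_ [f Hf]]]].
  apply (Lcon_hom_image Q B B A (fun x => x) (fun x => f (h x))).
  - exact (is_lattice_hom_preimage L B h (proj1 HL) Hh Hinj).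
  - now intros o args.
  - intro y. now exists y.
  - exact QA.
  - now apply Hperm.
  - intro x. apply (emb_congruence _ _ _ Hf).
  - intros x y. rewrite <- (comp_embedding_rel_eq Hf). split; [now intros -> | apply Hinj].
  - intros x y a b. rewrite (hom_ljoin h Hh). apply Hf.
  - intros x y a b. rewrite (hom_lmeet h Hh). apply Hf.
Qed.

Lemma Lcon_prod (I : Type) (L : I -> algebra lattice_sig) :
  (forall i, Lcon Q (L i)) -> Lcon Q (prod_alg L).
Proof.
  intro HL. destruct (Lcon_family L HL) as (A & f & d & QA & Hf).
  destruct HQ as (_&_&_&Qprod&_).
  apply (Lcon_hom_image Q (prod_alg L) (prod_alg L) (prod_alg A) (fun x => x)
           (fun x => prod_rel A (fun i => f i (x i)))).
  - apply is_lattice_prod. intro i. apply HL.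
  - now intros o args.
  - intro y. now exists y.
  - now apply Qprod.
  - now apply Hperm, Qprod.
  - intro x. apply is_congruence_prod_rel. intro i. apply Hf.
  - intros x y. rewrite <- prod_rel_eq_iff by (exact d || intros i; apply Hf).
    split; [intros -> i; apply rel_eq_refl | intro E].
    apply functional_extensionality_dep; intro i. now apply (comp_embedding_rel_eq (Hf i)).
  - intros x y a b. rewrite <- prod_rel_comp.
    apply prod_rel_iff. intro i. rewrite prod_ljoin. apply Hf.
  - intros x y a b. rewrite <- prod_rel_meet.
    apply prod_rel_iff. intro i. rewrite prod_lmeet. apply Hf.
Qed.

Lemma Lcon_ultraproduct (I : Type) (L : I -> algebra lattice_sig) (U : (I -> Prop) -> Prop) :
  ultrafilter U -> (forall i, Lcon Q (L i)) ->
  forall (B : algebra lattice_sig) (h : prod_alg L -> B),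
    is_hom (prod_alg L) B h -> surjective h ->
    (forall f g : prod_alg L, h f = h g <-> U (fun i => f i = g i)) ->
    Lcon Q B.
Proof.
  intros HU HL B h Hh Hs Hker. destruct (Lcon_family L HL) as (A & f & d & QA & Hf).
  destruct HQ as (_&_&_&_&Qultra).
  assert (QU : Q (ultraproduct U A)).
  { apply (Qultra I A U HU QA (ultraproduct U A) (ucls U) (ultraproduct_hom U HU A) (ucls_surj U)).
    intros; apply (ucls_eq U HU). }
  apply (Lcon_hom_image Q (prod_alg L) B (ultraproduct U A) h
           (fun x => uprod_rel U (fun i => f i (x i))) ); auto.
  - apply is_lattice_prod. intro i. apply HL.
  - intro x. apply is_congruence_uprod_rel; auto. intro i. apply Hf.
  - intros x y. rewrite Hker, <- (uprod_rel_eq_iff U HU d).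
    apply (U_iff U HU). intro i. apply (comp_embedding_rel_eq (Hf i)).
  - intros x y C D. rewrite <- (uprod_rel_comp U HU d).
    apply (U_iff U HU). intro i. rewrite prod_ljoin. apply Hf.
  - intros x y C D. rewrite <- (uprod_rel_meet U HU).
    apply (U_iff U HU). intro i. rewrite prod_lmeet. apply Hf.
Qed.

End Lcon_closure.

Theorem mainTheorem6 (S : signature) (Q : alg_class S) :
  quasivariety Q ->
  (forall A : algebra S, Q A -> congruence_permutable A) ->
  quasivariety (Lcon Q).
Proof.
  intros HQ Hperm.
  exact (conj (Lcon_singleton Q HQ Hperm)
        (conj (Lcon_iso Q HQ Hperm)
        (conj (Lcon_sub Q HQ Hperm)
        (conj (Lcon_prod Q HQ Hperm)
              (Lcon_ultraproduct Q HQ Hperm))))).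
Qed.
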